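(* Let $A(q,x)$, $B(q,x)$, $C(q,x)$ be the generating series $\sum_{n\ge0}\sum_{\gamma\in\mathcal{D}_n}q^{\#w(\gamma)}x^n$ for $w=dduu$, $w=dudu$, $w=duuu$ respectively; let $V(q,x)=\sum_{n\ge0}\sum_{\gamma\in\mathcal{D}_n}q^{\#du(\gamma)}x^n$; and let $F(y,q,x)=\sum_{n\ge0}\sum_{\gamma\in\mathcal{D}_n}y^{\#du(\gamma)}q^{\#duu(\gamma)}x^n$. Here $\#w(\gamma)$ is the number of occurrences of the factor $w$ in $\gamma$. Let $SC_3(x)=\sum_{n\ge0}sc_3(\mathcal{D}_n)x^n$, where $sc_3(\mathcal{D}_n)$ is the number of saturated chains of length 3 in $\mathcal{D}_n$. Then $$ SC_3(x)=2\left[\frac{\partial A}{\partial q}\right]_{q=1}+2\left[\frac{\partial B}{\partial q}\right]_{q=1}+2\left[\frac{\partial C}{\partial q}\right]_{q=1}+\left[\frac{\partial^3 V}{\partial q^3}\right]_{q=1}+6\left[\frac{\partial^2 F}{\partial y\,\partial q}-\frac{\partial F}{\partial q}\right]_{y=q=1}. $$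
   Context: A Dyck path of semilength $n$ is a lattice path from $(0,0)$ to $(2n,0)$ with steps $u=(1,1)$ and $d=(1,-1)$ never going below the $x$-axis, identified with a word over $\{u,d\}$. $\mathcal{D}_n$ is the set of Dyck paths of semilength $n$ ordered by containment: $\gamma\le\gamma'$ iff $\gamma$ lies weakly below $\gamma'$. A saturated chain of length $h$ is a sequence $\gamma^{(0)}<\cdots<\gamma^{(h)}$ in which each element covers the previous one. *)

From mathcomp Require Import all_boot all_order all_algebra.
Set Implicit Arguments. Unset Strict Implicit. Unset Printing Implicit Defensive.
Import Order.TTheory GRing.Theory Num.Theory.
Local Open Scope ring_scope.

(* Dyck words: true = u = (1,1), false = d = (1,-1). *)
Definition u_step := true.
Definition d_step := false.

Definition ht (s : seq bool) (i : nat) : int :=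
  \sum_(j < i) (if nth false s j then 1 else -1).

Definition dyckb (n : nat) (s : (n.*2).-tuple bool) : bool :=
  [forall i : 'I_(n.*2).+1, 0 <= ht s i] && (ht s n.*2 == 0).

Definition Dyck (n : nat) := {s : (n.*2).-tuple bool | dyckb s}.

Definition leD (n : nat) (g g' : Dyck n) : bool :=
  [forall i : 'I_(n.*2).+1, ht (val g) i <= ht (val g') i].
Definition ltD (n : nat) (g g' : Dyck n) : bool := (g != g') && leD g g'.
Definition coversD (n : nat) (g g' : Dyck n) : bool :=
  ltD g g' && ~~ [exists h : Dyck n, ltD g h && ltD h g'].

Definition sc3 (n : nat) : nat :=
  #|[set c : {ffun 'I_4 -> Dyck n} |
      [forall i : 'I_3, coversD (c (widen_ord (leqnSn 3) i)) (c (lift ord0 i))]]|.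

Definition occ (w s : seq bool) : nat :=
  \sum_(i < size s) (take (size w) (drop i s) == w).

(* x^n-coefficient of sum_gamma q^{#w(gamma)} x^n, as a polynomial in q *)
Definition genpoly (w : seq bool) (n : nat) : {poly int} :=
  \sum_(g : Dyck n) 'X^(occ w (val g)).

Definition w_dduu := [:: d_step; d_step; u_step; u_step].
Definition w_dudu := [:: d_step; u_step; d_step; u_step].
Definition w_duuu := [:: d_step; u_step; u_step; u_step].
Definition w_du := [:: d_step; u_step].
Definition w_duu := [:: d_step; u_step; u_step].

Definition Acoef := genpoly w_dduu.
Definition Bcoef := genpoly w_dudu.
Definition Ccoef := genpoly w_duuu.
Definition Vcoef := genpoly w_du.

(* x^n-coefficient of F(y,q,x): polynomial in y whose coefficients are polynomials in q *)
Definition Fcoef (n : nat) : {poly {poly int}} :=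
  \sum_(g : Dyck n) 'X^(occ w_du (val g)) * ('X^(occ w_duu (val g)))%:P.

(* A Dyck path is covered exactly by the paths obtained from it by turning one valley du into
   a peak ud, so a saturated chain of length 3 starting at γ is a choice of a valley of γ, then of
   the flipped path, then of the twice flipped path.  Flipping the valley at position i destroys
   it, creates a valley at i-1 when the step before is d and one at i+1 when the step after is u.
   Summing these local changes over the first two flips expresses the number of chains starting
   at γ through the statistics V = #du, #ddu, #duu, #dduu, #dudu, #dddu and #duuu:
     V(V-1)(V-2) + 3(V-1)(#ddu + #duu) + 2 #dduu + 2 #dudu + #dddu + #duuu.
   Reversing a path and exchanging u and d is an involution of D_n that fixes V and exchanges
   #ddu with #duu and #dddu with #duuu, so summed over D_n this becomes
     V(V-1)(V-2) + 6(V-1) #duu + 2 (#dduu + #dudu + #duuu),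
   which is the x^n coefficient of the right-hand side. *)

From mathcomp Require Import all_boot all_order all_algebra.
From mathcomp Require Import zify ring.
From Stdlib Require Import FunctionalExtensionality.
Set Implicit Arguments. Unset Strict Implicit. Unset Printing Implicit Defensive.
Import Order.TTheory GRing.Theory Num.Theory.
Local Open Scope ring_scope.

Definition b2z (b : bool) : int := if b then 1 else 0.

(* Words are read through their letter function [nth false s], i.e. followed by an endless
   tail of down steps; [vanishes_from p N] says that this tail starts at [N]. *)
Definition vanishes_from (p : nat -> bool) (N : nat) := forall j, (N <= j)%N -> p j = false.

Definition occurs_at (w : seq bool) (p : nat -> bool) (k : nat) : bool :=
  mkseq (fun j => p (k + j)%N) (size w) == w.

Definition countz (P : pred nat) (N : nat) : int := \sum_(0 <= k < N) b2z (P k).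

Lemma occurs_at_vanishing w p N k : last d_step w = u_step -> vanishes_from p N ->
  (N <= k + (size w).-1)%N -> occurs_at w p k = false.
Proof.
move=> w_up van le_N; apply/negbTE/negP => /eqP e.
have w_gt0 : (0 < size w)%N by case: w w_up e {le_N}.
have := congr1 (nth false ^~ (size w).-1) e.
by rewrite nth_mkseq ?prednK // nth_last w_up van.
Qed.

Definition w_ddu := [:: d_step; d_step; u_step].
Definition w_dddu := [:: d_step; d_step; d_step; u_step].

Definition valley (p : nat -> bool) : pred nat := occurs_at w_du p.

Definition valley_flip (p : nat -> bool) (i : nat) : nat -> bool :=
  fun j => if j == i then u_step else if j == i.+1 then d_step else p j.

Ltac unfold_occurs :=
  rewrite /valley /occurs_at /mkseq /w_du /w_ddu /w_duu /w_dddu /w_dduu /w_dudu /w_duuu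
          /d_step /u_step /= ?eqseq_cons ?andbT ?addn0 ?addn1 ?addn2 ?addn3 ?eqbF_neg ?eqb_id.

Ltac decide_nat_eqs :=
  repeat match goal with |- context[@eq_op _ ?a ?b] =>
    match type of a with nat =>
      first [ rewrite (_ : (a == b) = true); last by apply/eqP; lia
            | rewrite (_ : (a == b) = false); last by apply/eqP; lia ] end end.

Ltac case_all_letters :=
  repeat match goal with |- context[?p ?x] =>
    match type of p with nat -> bool => case: (p x) end end.

Lemma valley_vanishing p N i : vanishes_from p N -> valley p i ->
  [/\ p i = false, p i.+1 = true & (i.+1 < N)%N].
Proof.
move=> van; unfold_occurs => /andP [/negbTE p_i p_i1]; split => //.
by case: (leqP N i.+1) => // /van; rewrite p_i1.
Qed.

Lemma valley_flip_vanishing p N i : vanishes_from p N -> (i.+1 < N)%N ->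
  vanishes_from (valley_flip p i) N.
Proof. by move=> van lt_iN j le_Nj; rewrite /valley_flip; decide_nat_eqs; apply: van. Qed.

Lemma b2z_mul_eq (b : bool) (X Y : int) : (b -> X = Y) -> b2z b * X = b2z b * Y.
Proof. by case: b => [->|_] //; rewrite /b2z !mul0r. Qed.

Lemma big_nat_pick_shift c i N (F : nat -> int) : (i < N + c)%N ->
  \sum_(0 <= k < N) b2z (k + c == i)%N * F k = b2z (c <= i)%N * F (i - c)%N.
Proof.
move=> lt_i; case: (leqP c i) => le_ci.
  rewrite (bigD1_seq (i - c)%N) /= ?mem_index_iota ?iota_uniq //; last by lia.
  rewrite subnK // eqxx /b2z mul1r big1 ?addr0 // => k ne_k.
  by rewrite (_ : (k + c == i)%N = false) ?mul0r //; apply/eqP; move/eqP: ne_k; lia.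
rewrite big1 ?mul0r // => k _.
by rewrite (_ : (k + c == i)%N = false) ?mul0r //; apply/eqP; lia.
Qed.

Lemma sum_shift_vanishing c N (F : nat -> int) : (forall k, (N <= k + c)%N -> F k = 0) ->
  \sum_(0 <= i < N) b2z (c <= i)%N * F (i - c)%N = \sum_(0 <= k < N) F k.
Proof.
move=> F0; case: (leqP c N) => le_cN; last first.
  rewrite !big1_seq // => k; rewrite mem_index_iota => lt_kN.
    by apply: F0; lia.
  by rewrite /b2z ifF ?mul0r //; apply/negbTE; rewrite -ltnNge; lia.
rewrite (@big_cat_nat _ _ _ c 0 N) // /= big1_seq ?add0r; last first.
  move=> k; rewrite mem_index_iota => lt_kc.
  by rewrite /b2z ifF ?mul0r //; apply/negbTE; rewrite -ltnNge; lia.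
rewrite -{1}(add0n c) big_addn [RHS](@big_cat_nat _ _ _ (N - c) 0 N) ?leq_subr //=.
rewrite [X in _ = _ + X]big1_seq ?addr0; last first.
  by move=> k; rewrite mem_index_iota => k_ge; apply: F0; lia.
by apply: eq_bigr => k _; rewrite addnK /b2z ifT ?mul1r //; lia.
Qed.

Lemma flip_cases (i k : nat) :
  i = k.+2 \/ i = k.+1 \/ i = k \/ k = i.+1 \/ (k.+2 < i)%N \/ (i.+1 < k)%N.
Proof. lia. Qed.

Ltac flip_local k i hi hi1 :=
  let h := fresh "h" in let h1 := fresh "h1" in
  move: (hi) (hi1);
  case: (flip_cases i k) => [->|[->|[->|[->|far]]]] h h1; rewrite /valley_flip; unfold_occurs;
  decide_nat_eqs; rewrite ?h ?h1; case_all_letters; by [].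

Section LocalFlip.
Variables (p : nat -> bool) (i : nat).
Hypotheses (p_i : p i = false) (p_i1 : p i.+1 = true).

(* Stated in the shape [b2z (k + c == i) * F k] that [big_nat_pick_shift] sums. *)
Lemma valley_flip_local k :
  b2z (valley (valley_flip p i) k) = b2z (valley p k) + b2z (k + 1 == i)%N * b2z (~~ p k)
     - b2z (k + 0 == i)%N * 1 + b2z (k + 0 == i.+1)%N * b2z (p k.+1).
Proof. flip_local k i p_i p_i1. Qed.

Lemma valley_flip_local_ddu k :
  b2z (occurs_at w_ddu (valley_flip p i) k) = b2z (occurs_at w_ddu p k)
     + b2z (k + 2 == i)%N * b2z (~~ p k && ~~ p k.+1)
     - b2z (k + 1 == i)%N * b2z (~~ p k) + b2z (k + 0 == i.+1)%N * b2z (~~ p k.+1 && p k.+2).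
Proof. flip_local k i p_i p_i1. Qed.

Lemma valley_flip_local_duu k :
  b2z (occurs_at w_duu (valley_flip p i) k) = b2z (occurs_at w_duu p k)
     + b2z (k + 2 == i)%N * b2z (~~ p k && p k.+1)
     - b2z (k + 0 == i)%N * b2z (p k.+2) + b2z (k + 0 == i.+1)%N * b2z (p k.+1 && p k.+2).
Proof. flip_local k i p_i p_i1. Qed.
End LocalFlip.

Section FlipCounts.
Variables (p : nat -> bool) (i N : nat).
Hypotheses (p_i : p i = false) (p_i1 : p i.+1 = true) (lt_i1N : (i.+1 < N)%N).

Lemma count_valley_flip :
  countz (valley (valley_flip p i)) N = countz (valley p) N
    + b2z (1 <= i)%N * b2z (~~ p (i - 1)%N) - 1 + b2z (p i.+2).
Proof.
rewrite /countz; under eq_bigr do rewrite valley_flip_local //.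
rewrite !big_split /= sumrN !big_nat_pick_shift; try lia.
by rewrite subn0 /b2z /= !mul1r.
Qed.

Lemma count_ddu_flip :
  countz (occurs_at w_ddu (valley_flip p i)) N = countz (occurs_at w_ddu p) N
    + b2z (2 <= i)%N * b2z (~~ p (i - 2)%N && ~~ p (i - 2)%N.+1)
    - b2z (1 <= i)%N * b2z (~~ p (i - 1)%N) + b2z (~~ p i.+2 && p i.+3).
Proof.
rewrite /countz; under eq_bigr do rewrite valley_flip_local_ddu //.
rewrite !big_split /= sumrN !big_nat_pick_shift; try lia.
by rewrite subn0 /b2z /= !mul1r.
Qed.

Lemma count_duu_flip :
  countz (occurs_at w_duu (valley_flip p i)) N = countz (occurs_at w_duu p) N
    + b2z (2 <= i)%N * b2z (~~ p (i - 2)%N && p (i - 2)%N.+1)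
    - b2z (p i.+2) + b2z (p i.+2 && p i.+3).
Proof.
rewrite /countz; under eq_bigr do rewrite valley_flip_local_duu //.
rewrite !big_split /= sumrN !big_nat_pick_shift; try lia.
by rewrite !subn0 /b2z /= !mul1r.
Qed.
End FlipCounts.

Ltac case_letters := unfold_occurs; rewrite /b2z; case_all_letters.

Ltac shift_by c :=
  let van := fresh "van" in
  move=> van; rewrite /countz -(@sum_shift_vanishing c); last first;
  [ by move=> k le_k; rewrite (occurs_at_vanishing _ van) //=; lia
  | apply: eq_bigr => -[|[|j]] _ //=; rewrite ?subn1 ?subn2 /=; case_letters; by [] ].

Section NeighbourSums.
Variables (p : nat -> bool) (N : nat).

Lemma sum_valley_prev_d : vanishes_from p N ->
  \sum_(0 <= i < N) b2z (valley p i) * (b2z (1 <= i)%N * b2z (~~ p (i - 1)%N))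
    = countz (occurs_at w_ddu p) N.
Proof. shift_by 1%N. Qed.

Lemma sum_valley_prev_dd : vanishes_from p N ->
  \sum_(0 <= i < N) b2z (valley p i) * (b2z (2 <= i)%N * b2z (~~ p (i - 2)%N && ~~ p (i - 2)%N.+1))
    = countz (occurs_at w_dddu p) N.
Proof. shift_by 2%N. Qed.

Lemma sum_valley_prev_du : vanishes_from p N ->
  \sum_(0 <= i < N) b2z (valley p i) * (b2z (2 <= i)%N * b2z (~~ p (i - 2)%N && p (i - 2)%N.+1))
    = countz (occurs_at w_dudu p) N.
Proof. shift_by 2%N. Qed.

Lemma sum_valley_prev_d_next_u : vanishes_from p N ->
  \sum_(0 <= i < N) b2z (valley p i) * (b2z (1 <= i)%N * b2z (~~ p (i - 1)%N) * b2z (p i.+2))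
    = countz (occurs_at w_dduu p) N.
Proof. shift_by 1%N. Qed.

Lemma sum_valley_next_u :
  \sum_(0 <= i < N) b2z (valley p i) * b2z (p i.+2) = countz (occurs_at w_duu p) N.
Proof. by apply: eq_bigr => i _; case_letters. Qed.

Lemma sum_valley_next_du :
  \sum_(0 <= i < N) b2z (valley p i) * b2z (~~ p i.+2 && p i.+3) = countz (occurs_at w_dudu p) N.
Proof. by apply: eq_bigr => i _; case_letters. Qed.

Lemma sum_valley_next_uu :
  \sum_(0 <= i < N) b2z (valley p i) * b2z (p i.+2 && p i.+3) = countz (occurs_at w_duuu p) N.
Proof. by apply: eq_bigr => i _; case_letters. Qed.
End NeighbourSums.

Definition up_chains2 (p : nat -> bool) (N : nat) : int :=
  \sum_(0 <= j < N) b2z (valley p j) * countz (valley (valley_flip p j)) N.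

Definition up_chains3 (p : nat -> bool) (N : nat) : int :=
  \sum_(0 <= i < N) b2z (valley p i) * up_chains2 (valley_flip p i) N.

Lemma up_chains2E p N : vanishes_from p N -> up_chains2 p N =
  countz (valley p) N * (countz (valley p) N - 1)
  + countz (occurs_at w_ddu p) N + countz (occurs_at w_duu p) N.
Proof.
move=> van; set V := countz (valley p) N.
transitivity (\sum_(0 <= j < N) (b2z (valley p j) * (V - 1)
   + b2z (valley p j) * (b2z (1 <= j)%N * b2z (~~ p (j - 1)%N)) + b2z (valley p j) * b2z (p j.+2))).
  apply: eq_bigr => j _; rewrite -!mulrDr; apply: b2z_mul_eq => vj.
  by case: (valley_vanishing van vj) => *; rewrite count_valley_flip //; ring.
by rewrite !big_split /= sum_valley_prev_d // sum_valley_next_u -mulr_suml.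
Qed.

Section UpChains3.
Variables (p : nat -> bool) (N : nat).
Hypothesis van : vanishes_from p N.
Let V := countz (valley p) N.
Let occ_p w := countz (occurs_at w p) N.

Lemma up_chains3E : up_chains3 p N = V * (V - 1) * (V - 2)
   + 3 * (V - 1) * (occ_p w_ddu + occ_p w_duu)
   + 2 * occ_p w_dduu + 2 * occ_p w_dudu + occ_p w_dddu + occ_p w_duuu.
Proof.
set K := (V - 1) * (V - 2) + occ_p w_ddu + occ_p w_duu.
transitivity (\sum_(0 <= i < N) (b2z (valley p i) * K
   + (2 * V - 3) * (b2z (valley p i) * (b2z (1 <= i)%N * b2z (~~ p (i - 1)%N)))
   + (2 * V - 3) * (b2z (valley p i) * b2z (p i.+2))
   + 2 * (b2z (valley p i) * (b2z (1 <= i)%N * b2z (~~ p (i - 1)%N) * b2z (p i.+2)))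
   + b2z (valley p i) * (b2z (2 <= i)%N * b2z (~~ p (i - 2)%N && ~~ p (i - 2)%N.+1))
   + b2z (valley p i) * b2z (~~ p i.+2 && p i.+3)
   + b2z (valley p i) * b2z (p i.+2 && p i.+3)
   + b2z (valley p i) * (b2z (2 <= i)%N * b2z (~~ p (i - 2)%N && p (i - 2)%N.+1)))).
  apply: eq_bigr => i _.
  case vi: (valley p i); last by rewrite /b2z; ring.
  case: (valley_vanishing van vi) => p_i p_i1 lt_iN.
  rewrite up_chains2E; last exact: valley_flip_vanishing.
  rewrite count_valley_flip // count_ddu_flip // count_duu_flip // /K /occ_p -/V.
  by rewrite /b2z; case: (1 <= i)%N; case: (p (i - 1)%N); case: (p i.+2) => /=; ring.
rewrite !big_split /= -big_distrl -!big_distrr /=.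
rewrite sum_valley_prev_d // sum_valley_next_u sum_valley_prev_d_next_u // sum_valley_prev_dd //.
rewrite sum_valley_next_du sum_valley_next_uu sum_valley_prev_du // /K /occ_p -/V; ring.
Qed.
End UpChains3.

Definition stepz (b : bool) : int := if b then 1 else -1.

Lemma ht0 s : ht s 0 = 0.
Proof. by rewrite /ht big_ord0. Qed.

Lemma htS s k : ht s k.+1 = ht s k + stepz (nth false s k).
Proof. by rewrite /ht big_ord_recr. Qed.

Lemma ht_downs s k : ht s k = k%:Z - 2 * \sum_(j < k) b2z (~~ nth false s j).
Proof.
elim: k => [|k IH]; first by rewrite ht0 big_ord0.
by rewrite htS IH big_ord_recr /= /stepz /b2z; case: (nth false s k) => /=; rewrite intS; ring.
Qed.

Lemma ht_lt_add2 s t k : ht s k < ht t k -> ht s k + 2 <= ht t k.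
Proof. rewrite !ht_downs; lia. Qed.

Lemma ht_between_add2 s t k : ht s k <= ht t k -> ht t k <= ht s k + 2 ->
  ht t k = ht s k \/ ht t k = ht s k + 2.
Proof. rewrite !ht_downs; lia. Qed.

Lemma eq_from_ht (s t : seq bool) N : size s = N -> size t = N ->
  (forall k, (k <= N)%N -> ht s k = ht t k) -> s = t.
Proof.
move=> size_s size_t eq_ht; apply: (@eq_from_nth _ false); first by rewrite size_s size_t.
move=> j; rewrite size_s => lt_jN.
have := eq_ht j.+1 lt_jN; rewrite !htS eq_ht ?(ltnW lt_jN) // => /addrI.
by rewrite /stepz; case: (nth false s j); case: (nth false t j).
Qed.

Definition flip_word (s : seq bool) (i : nat) : seq bool :=
  mkseq (valley_flip (nth false s) i) (size s).

Lemma size_flip_word s i : size (flip_word s i) = size s.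
Proof. by rewrite size_mkseq. Qed.

Lemma valley_size s i : valley (nth false s) i -> (i.+1 < size s)%N.
Proof.
unfold_occurs => /andP [_]; case: (ltnP i.+1 (size s)) => // le_si.
by rewrite nth_default.
Qed.

Lemma nth_flip_word s i : valley (nth false s) i ->
  nth false (flip_word s i) = valley_flip (nth false s) i.
Proof.
move=> /valley_size lt_is; apply: functional_extensionality => j.
case: (ltnP j (size s)) => lt_js; first by rewrite nth_mkseq.
rewrite nth_default ?size_mkseq // /valley_flip; decide_nat_eqs.
by rewrite nth_default.
Qed.

Lemma ht_flip_word s i k : valley (nth false s) i ->
  ht (flip_word s i) k = ht s k + b2z (k == i.+1) * 2.
Proof.
move=> vi; have /andP [s_i s_i1] := vi; move: s_i s_i1; unfold_occurs => s_i s_i1.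
elim: k => [|k IH]; first by rewrite !ht0 /b2z add0r mul0r.
rewrite !htS IH nth_flip_word // /valley_flip /u_step /d_step /b2z /stepz.
case: (k =P i) => [->|ne_ki]; first by rewrite (negbTE s_i); decide_nat_eqs; ring.
case: (k =P i.+1) => [->|ne_ki1]; first by rewrite s_i1; decide_nat_eqs; ring.
by rewrite (_ : (k.+1 == i.+1) = false) ?eqSS; [ring | apply/eqP].
Qed.

Lemma flip_word_tupleP m (t : m.-tuple bool) i : size (flip_word t i) == m.
Proof. by rewrite size_flip_word size_tuple. Qed.
Definition flip_tuple m (t : m.-tuple bool) i : m.-tuple bool := Tuple (flip_word_tupleP t i).

Section DyckCovers.
Variable n : nat.
Local Notation N := n.*2.
Implicit Types g h : Dyck n.

Definition dword g : seq bool := val (val g).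

(* Used only at valleys; elsewhere the flipped word may not be Dyck and [insubd] returns [g]. *)
Definition flip_dyck g i : Dyck n := insubd g (flip_tuple (val g) i).

Lemma size_dword g : size (dword g) = N.
Proof. by rewrite /dword size_tuple. Qed.

Lemma dword_vanishing g : vanishes_from (nth false (dword g)) N.
Proof. by move=> j le_Nj; rewrite nth_default // size_dword. Qed.

Lemma ht_dword_ge0 g k : (k <= N)%N -> 0 <= ht (dword g) k.
Proof.
move=> le_kN; have /andP [/forallP ge0 _] := valP g.
exact: (ge0 (Ordinal (le_kN : (k < N.+1)%N))).
Qed.

Lemma ht_dword_end g : ht (dword g) N = 0.
Proof. by have /andP [_ /eqP]:= valP g. Qed.

Lemma leDP g h : reflect (forall k, (k <= N)%N -> ht (dword g) k <= ht (dword h) k) (leD g h).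
Proof.
apply: (iffP forallP) => le_gh k; last by apply: le_gh; rewrite -ltnS.
by move=> le_kN; exact: (le_gh (Ordinal (le_kN : (k < N.+1)%N))).
Qed.

Lemma dyck_eq_from_ht g h : (forall k, (k <= N)%N -> ht (dword g) k = ht (dword h) k) -> g = h.
Proof. by move=> eq_ht; do 2 apply: val_inj; apply: (eq_from_ht _ _ eq_ht); rewrite size_dword. Qed.

Section Flip.
Variables (g : Dyck n) (i : nat).
Hypothesis vi : valley (nth false (dword g)) i.

Lemma valley_dword_lt : (i.+1 < N)%N.
Proof. by rewrite -(size_dword g) valley_size. Qed.

Lemma dyck_flip_tuple : dyckb (flip_tuple (val g) i).
Proof.
apply/andP; split.
  apply/forallP => k; rewrite [ht _ _](ht_flip_word _ vi).
  by have := ht_dword_ge0 g (ltnSE (ltn_ord k)); rewrite /b2z; case: ifP => _; lia.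
rewrite [ht _ _](ht_flip_word _ vi) ht_dword_end.
by rewrite /b2z ifF ?mul0r ?addr0 //; apply/eqP; have := valley_dword_lt; lia.
Qed.

Lemma dword_flip : dword (flip_dyck g i) = flip_word (dword g) i.
Proof. by rewrite /dword /flip_dyck insubdK //; exact: dyck_flip_tuple. Qed.

Lemma ht_flip_dyck k : ht (dword (flip_dyck g i)) k = ht (dword g) k + b2z (k == i.+1) * 2.
Proof. by rewrite dword_flip ht_flip_word. Qed.

Lemma ltD_flip : ltD g (flip_dyck g i).
Proof.
apply/andP; split.
  by apply/eqP => e; have := ht_flip_dyck i.+1; rewrite -e eqxx /b2z; lia.
by apply/leDP => k _; rewrite ht_flip_dyck /b2z; case: ifP => _; lia.
Qed.

Lemma coversD_flip : coversD g (flip_dyck g i).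
Proof.
rewrite /coversD ltD_flip /=; apply/negP.
case/existsP => h /andP [/andP [ne_gh /leDP le_gh] /andP [ne_hf /leDP le_hf]].
have ht_h_off k : (k <= N)%N -> k != i.+1 -> ht (dword h) k = ht (dword g) k.
  move=> le_kN ne_k; have := le_gh k le_kN; have := le_hf k le_kN.
  by rewrite ht_flip_dyck /b2z (negbTE ne_k); lia.
have le_i1 := ltnW valley_dword_lt.
have := le_hf _ le_i1; rewrite ht_flip_dyck eqxx /b2z mul1r => le_h2.
case: (ht_between_add2 (le_gh _ le_i1) le_h2) => [|] ht_h_i1.
- move/eqP: ne_gh; apply; apply: dyck_eq_from_ht => k le_kN.
  by case: (k =P i.+1) => [->|/eqP ne_k]; rewrite ?ht_h_i1 ?ht_h_off.
- move/eqP: ne_hf; apply; apply: dyck_eq_from_ht => k le_kN; rewrite ht_flip_dyck /b2z.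
  by case: (k =P i.+1) => [->|/eqP ne_k]; rewrite ?ht_h_i1 ?eqxx ?mul1r // ht_h_off // mul0r addr0.
Qed.
End Flip.

Lemma ltD_gap g h : ltD g h -> exists2 k, (k <= N)%N & ht (dword g) k < ht (dword h) k.
Proof.
case/andP => ne_gh /leDP le_gh.
case: (boolP [exists k : 'I_N.+1, ht (dword g) k < ht (dword h) k]).
  by case/existsP => k lt_k; exists k; rewrite // -ltnS.
move/existsPn => no_gap; case/eqP: ne_gh; apply: dyck_eq_from_ht => k le_kN.
by have := no_gap (Ordinal (le_kN : (k < N.+1)%N)); have := le_gh k le_kN; rewrite /=; lia.
Qed.

Lemma ltD_lowest_gap g h : ltD g h -> exists2 k, (k <= N)%N &
  ht (dword g) k < ht (dword h) k /\
  forall j, (j <= N)%N -> ht (dword g) j < ht (dword h) j -> ht (dword g) k <= ht (dword g) j.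
Proof.
move=> lt_gh; pose gap_at (m : nat) := [exists k : 'I_N.+1,
  (ht (dword g) k < ht (dword h) k) && (ht (dword g) k == m%:Z)].
have gap_atP k : (k <= N)%N -> ht (dword g) k < ht (dword h) k ->
    exists2 m, gap_at m & ht (dword g) k = m%:Z.
  move=> le_kN lt_k; have := ht_dword_ge0 g le_kN.
  case E : (ht (dword g) k) => [m|//] _; exists m => //.
  by apply/existsP; exists (Ordinal (le_kN : (k < N.+1)%N)); rewrite /= lt_k E eqxx.
have [k0 le_k0N /(gap_atP _ le_k0N) [m0 gap_m0 _]] := ltD_gap lt_gh.
case: (ex_minnP (ex_intro _ m0 gap_m0)) => m /existsP [k /andP [lt_k /eqP ht_k]] min_m.
exists k; first by rewrite -ltnS.
split=> // j le_jN /(gap_atP _ le_jN) [m' /min_m le_mm' ->].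
by rewrite ht_k lez_nat.
Qed.

(* The lowest point where [h] lies strictly above [g] sits right after a valley of [g]. *)
Lemma ltD_flip_leD g h : ltD g h ->
  exists2 i, valley (nth false (dword g)) i & leD (flip_dyck g i) h.
Proof.
move=> lt_gh; have /andP [_ /leDP le_gh] := lt_gh.
have [k le_kN [lt_k min_gap]] := ltD_lowest_gap lt_gh.
have [i k_i1] : exists i, k = i.+1.
  by case: k lt_k {le_kN min_gap} => [|i]; [rewrite !ht0 | exists i].
subst k; have lt_i1N : (i.+1 < N)%N.
  by rewrite ltn_neqAle le_kN andbT; apply/eqP => e; move: lt_k; rewrite e !ht_dword_end.
have g_i : nth false (dword g) i = false.
  apply/negbTE/negP => g_i; have := htS (dword g) i; rewrite g_i /stepz => ht_gk.
  have lt_i : ht (dword g) i < ht (dword h) i.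
    by have := htS (dword h) i; rewrite /stepz; case: (nth false _ _); lia.
  by have := min_gap i (ltnW (ltnW lt_i1N)) lt_i; lia.
have g_i1 : nth false (dword g) i.+1.
  apply/negPn/negP => /negbTE g_i1; have := htS (dword g) i.+1; rewrite g_i1 /stepz => ht_gk1.
  have lt_i2 : ht (dword g) i.+2 < ht (dword h) i.+2.
    by have := htS (dword h) i.+1; rewrite /stepz; case: (nth false _ _); lia.
  by have := min_gap i.+2 lt_i1N lt_i2; lia.
have vi : valley (nth false (dword g)) i by unfold_occurs; rewrite g_i g_i1.
exists i => //; apply/leDP => j le_jN; rewrite ht_flip_dyck //.
case: (j =P i.+1) => [->|_]; last by rewrite /b2z mul0r addr0 le_gh.
by rewrite /b2z mul1r ht_lt_add2.
Qed.

Lemma coversD_flipP g h : coversD g h ->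
  exists2 i, valley (nth false (dword g)) i & h = flip_dyck g i.
Proof.
case/andP => lt_gh no_between; have [i vi le_fh] := ltD_flip_leD lt_gh.
exists i => //; apply/eqP; rewrite eq_sym; apply: contraNT no_between => ne_fh.
by apply/existsP; exists (flip_dyck g i); rewrite ltD_flip //= /ltD ne_fh.
Qed.

Lemma flip_dyck_inj g i j : valley (nth false (dword g)) i -> valley (nth false (dword g)) j ->
  flip_dyck g i = flip_dyck g j -> i = j.
Proof.
move=> vi vj e; have := ht_flip_dyck vi i.+1; rewrite e ht_flip_dyck // eqxx /b2z.
by case: (i.+1 =P j.+1) => [[]|_] //; lia.
Qed.

Lemma b2z_coversD g h : b2z (coversD g h) =
  \sum_(0 <= i < N) b2z (valley (nth false (dword g)) i) * b2z (h == flip_dyck g i).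
Proof.
case cov_gh: (coversD g h).
  have [i0 vi0 ->] := coversD_flipP cov_gh.
  have lt_i0N : (i0 < N)%N by apply: ltnW; apply: valley_dword_lt vi0.
  rewrite (bigD1_seq i0) /= ?mem_index_iota ?iota_uniq // vi0 eqxx /b2z mul1r big1 ?addr0 //.
  move=> j ne_j; case vj: (valley _ j); last by rewrite mul0r.
  by case: eqP => [/flip_dyck_inj e|_]; [move: ne_j; rewrite e ?eqxx | rewrite mulr0].
rewrite big1 // => i _; case vi: (valley _ i); last by rewrite /b2z mul0r.
by case: eqP => [e|_]; [move: cov_gh; rewrite e coversD_flip | rewrite /b2z mulr0].
Qed.

Lemma sum_coversD g (F : Dyck n -> int) :
  \sum_h b2z (coversD g h) * F h
  = \sum_(0 <= i < N) b2z (valley (nth false (dword g)) i) * F (flip_dyck g i).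
Proof.
under eq_bigr do rewrite b2z_coversD big_distrl /=.
rewrite exchange_big /=; apply: eq_bigr => i _.
rewrite (bigD1 (flip_dyck g i)) //= eqxx /b2z mulr1 big1 ?addr0 // => h /negbTE ->.
by rewrite mulr0 mul0r.
Qed.
End DyckCovers.

Section Chains.
Variable n : nat.
Local Notation N := n.*2.
Local Notation T := (Dyck n).

Definition chain_of_tuple (x : T * T * T * T) : {ffun 'I_4 -> T} :=
  [ffun i : 'I_4 => nth x.1.1.1 [:: x.1.1.1; x.1.1.2; x.1.2; x.2] i].
Definition tuple_of_chain (c : {ffun 'I_4 -> T}) : T * T * T * T :=
  (c (@Ordinal 4 0 isT), c (@Ordinal 4 1 isT), c (@Ordinal 4 2 isT), c (@Ordinal 4 3 isT)).

Lemma chain_of_tupleK : cancel chain_of_tuple tuple_of_chain.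
Proof. by case=> [[[a b] c] d]; rewrite /tuple_of_chain !ffunE. Qed.

Lemma tuple_of_chainK : cancel tuple_of_chain chain_of_tuple.
Proof.
move=> c; apply/ffunP => i; rewrite ffunE /=.
by case: i => [[|[|[|[|k]]]] lt_i4] //=; congr (c _); apply: val_inj.
Qed.

Lemma sc3_sum_covers : (sc3 n)%:Z = \sum_(a : T) \sum_(b : T) \sum_(c : T) \sum_(d : T)
   b2z (coversD a b) * b2z (coversD b c) * b2z (coversD c d).
Proof.
rewrite /sc3 -sum1_card big_mkcond -natz natr_sum /=.
rewrite (reindex chain_of_tuple) /=; last first.
  by exists tuple_of_chain => x _; [exact: chain_of_tupleK | exact: tuple_of_chainK].
rewrite pair_bigA pair_bigA pair_bigA /=; apply: eq_bigr => -[[[a b] c] d] _ /=.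
rewrite inE; case: (boolP [forall i, _]) => [/forallP cov | /forallPn [[[|[|[|k]]] lt_k3]] //].
- have := cov (@Ordinal 3 0 isT); have := cov (@Ordinal 3 1 isT); have := cov (@Ordinal 3 2 isT).
  by rewrite !ffunE /= => -> -> ->.
all: by rewrite !ffunE /= => /negbTE ->; rewrite /b2z ?(mul0r, mulr0).
Qed.

Lemma up_chains_dyck (a : T) :
  \sum_(b : T) \sum_(c : T) \sum_(d : T) b2z (coversD a b) * b2z (coversD b c) * b2z (coversD c d)
  = up_chains3 (nth false (dword a)) N.
Proof.
have covers1 (c : T) : \sum_(d : T) b2z (coversD c d) * 1 = countz (valley (nth false (dword c))) N.
  by rewrite sum_coversD; apply: eq_bigr => i _; rewrite mulr1.
have covers2 (b : T) : \sum_(c : T) b2z (coversD b c) * countz (valley (nth false (dword c))) N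
    = up_chains2 (nth false (dword b)) N.
  rewrite sum_coversD; apply: eq_bigr => j _; apply: b2z_mul_eq => vj.
  by rewrite dword_flip // nth_flip_word.
transitivity (\sum_(b : T) b2z (coversD a b) * up_chains2 (nth false (dword b)) N).
  apply: eq_bigr => b _; rewrite -covers2 big_distrr /=; apply: eq_bigr => c _.
  by rewrite -covers1 !big_distrr /=; apply: eq_bigr => d _; rewrite mulr1 !mulrA.
rewrite sum_coversD; apply: eq_bigr => i _; apply: b2z_mul_eq => vi.
by rewrite dword_flip // nth_flip_word.
Qed.
End Chains.

Lemma take_drop_mkseq (s : seq bool) i m : (i + m <= size s)%N ->
  take m (drop i s) = mkseq (fun j => nth false s (i + j)) m.
Proof.
move=> le_s; have size_m : size (take m (drop i s)) = m by rewrite size_takel // size_drop; lia.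
apply: (@eq_from_nth _ false) => [|j]; rewrite size_m ?size_mkseq // => lt_j.
by rewrite nth_take ?nth_drop ?nth_mkseq.
Qed.

Lemma occ_countz w s : last d_step w = u_step ->
  (occ w s)%:Z = countz (occurs_at w (nth false s)) (size s).
Proof.
move=> w_up; rewrite /occ /countz -natz natr_sum big_mkord; apply: eq_bigr => -[i lt_is] _ /=.
rewrite (_ : forall b : bool, b%:R = b2z b); last by case.
case: (leqP (i + size w) (size s)) => [le_s | lt_s].
  by rewrite take_drop_mkseq // /occurs_at; case: eqP.
rewrite (occurs_at_vanishing _ _ (N := size s)) //; first last.
- by move: lt_s; case: w w_up => //= ? ? _; lia.
- by move=> j; apply: nth_default.
case: eqP => // /(congr1 size); rewrite size_take size_drop.
(* [simpl] turns the [size] of [seq (Equality.sort bool)] into one [lia] recognises. *)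
by case: ifP => [lt_w|_] e; exfalso; simpl in *; lia.
Qed.

Definition mirror (s : seq bool) : seq bool := rev (map negb s).

Lemma mirrorK : involutive mirror.
Proof.
by move=> s; rewrite /mirror map_rev revK -map_comp map_id_in // => b _ /=; rewrite negbK.
Qed.

Lemma size_mirror s : size (mirror s) = size s.
Proof. by rewrite size_rev size_map. Qed.

Lemma nth_mirror s j : nth false (mirror s) j = (j < size s)%N && ~~ nth false s (size s - j.+1).
Proof.
case: (ltnP j (size s)) => lt_j; last by rewrite nth_default // size_mirror.
by rewrite nth_rev size_map // (nth_map false) //; lia.
Qed.

Lemma mirror_mkseq f m : mirror (mkseq f m) = mkseq (fun j => ~~ f (m - j.+1)%N) m.
Proof.
apply: (@eq_from_nth _ false) => [|j]; rewrite size_mirror !size_mkseq // => lt_j.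
by rewrite nth_mirror size_mkseq lt_j !nth_mkseq //; lia.
Qed.

Lemma occurs_at_mirror w s k : last d_step w = u_step ->
  occurs_at w (nth false (mirror s)) k =
    (k + size w <= size s)%N && occurs_at (mirror w) (nth false s) (size s - size w - k).
Proof.
move=> w_up; case: (leqP (k + size w) (size s)) => [le_s | lt_s] /=; last first.
  apply: (occurs_at_vanishing _ _ (N := size s)) => //.
    by move=> j le_j; rewrite nth_default // size_mirror.
  by move: lt_s; case: w w_up => //= ? ? _; lia.
rewrite /occurs_at size_mirror -[_ == mirror w](inj_eq (can_inj mirrorK)) mirrorK mirror_mkseq.
congr (_ == w); apply: (@eq_from_nth _ false) => [|j]; rewrite !size_mkseq // => lt_j.
rewrite !nth_mkseq // nth_mirror (_ : (k + j < size s)%N); last by lia.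
by congr (~~ nth _ _ _); lia.
Qed.

Lemma sum_reflect_window L N (Q : pred nat) : (0 < L)%N ->
  (forall k, (N <= k + L.-1)%N -> Q k = false) ->
  \sum_(0 <= k < N) b2z ((k + L <= N)%N && Q (N - L - k)%N) = \sum_(0 <= k < N) b2z (Q k).
Proof.
move=> L_gt0 Q0; rewrite big_nat_rev /= -(@sum_shift_vanishing L.-1 N (fun k => b2z (Q k))).
  apply: eq_big_nat => k lt_kN; case: (leqP L.-1 k) => le_k.
    rewrite (_ : 0 + N - k.+1 + L <= N)%N; last by lia.
    by rewrite (_ : N - L - _ = k - L.-1)%N; [rewrite /b2z mul1r | lia].
  by rewrite (_ : 0 + N - k.+1 + L <= N = false)%N ?mul0r //; lia.
by move=> k le_k; rewrite Q0.
Qed.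

Lemma countz_mirror w s : last d_step w = u_step -> last d_step (mirror w) = u_step ->
  countz (occurs_at w (nth false (mirror s))) (size s)
  = countz (occurs_at (mirror w) (nth false s)) (size s).
Proof.
move=> w_up mw_up; rewrite /countz; under eq_bigr do rewrite occurs_at_mirror //.
apply: sum_reflect_window => [|k le_k].
  by case: w w_up {mw_up}.
apply: (occurs_at_vanishing _ _ (N := size s)) => //; last by rewrite size_mirror.
by move=> j le_j; rewrite nth_default.
Qed.

Lemma ht_mirror s k : (k <= size s)%N -> ht (mirror s) k = ht s (size s - k) - ht s (size s).
Proof.
elim: k => [|k IH] le_k; first by rewrite ht0 subn0 subrr.
rewrite htS IH ?(ltnW le_k) // nth_mirror le_k (_ : size s - k = (size s - k.+1).+1)%N; last by lia.
by rewrite htS /stepz; case: (nth false s _) => /=; ring.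
Qed.

Lemma mirror_tupleP m (t : m.-tuple bool) : size (mirror t) == m.
Proof. by rewrite size_mirror size_tuple. Qed.
Definition mirror_tuple m (t : m.-tuple bool) : m.-tuple bool := Tuple (mirror_tupleP t).

Section DyckMirror.
Variable n : nat.
Local Notation N := n.*2.

Lemma dyck_mirror_tuple (g : Dyck n) : dyckb (mirror_tuple (val g)).
Proof.
have ht_m k : (k <= N)%N -> ht (mirror (dword g)) k = ht (dword g) (N - k).
  by move=> le_kN; rewrite ht_mirror size_dword // ht_dword_end subr0.
apply/andP; split; last by rewrite [ht _ _]ht_m // subnn ht0.
apply/forallP => k; rewrite [ht _ _]ht_m ?ht_dword_ge0 ?leq_subr //.
by rewrite -ltnS.
Qed.

Definition mirror_dyck (g : Dyck n) : Dyck n := insubd g (mirror_tuple (val g)).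

Lemma dword_mirror g : dword (mirror_dyck g) = mirror (dword g).
Proof. by rewrite /dword /mirror_dyck insubdK //; exact: dyck_mirror_tuple. Qed.

Lemma mirror_dyck_inj : injective mirror_dyck.
Proof.
move=> g h e; do 2 apply: val_inj.
by rewrite -[val (val g)]mirrorK -[val (val h)]mirrorK -!/(dword _) -!dword_mirror e.
Qed.

Lemma countz_dyck_mirror w g : last d_step w = u_step -> last d_step (mirror w) = u_step ->
  countz (occurs_at w (nth false (dword (mirror_dyck g)))) N
  = countz (occurs_at (mirror w) (nth false (dword g))) N.
Proof. by move=> w_up mw_up; rewrite dword_mirror -(size_dword g) countz_mirror. Qed.

Lemma sum_dyck_mirror (F : Dyck n -> int) : \sum_g F (mirror_dyck g) = \sum_g F g.
Proof. by rewrite [RHS](reindex_inj mirror_dyck_inj). Qed.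
End DyckMirror.

Lemma deriv_exp_at1 (k : nat) : (('X^k : {poly int})^`()).[1] = k%:Z.
Proof. by rewrite derivXn hornerMn hornerXn expr1n natz. Qed.

Lemma deriv3_exp_at1 (k : nat) :
  (('X^k : {poly int})^`(3)).[1] = k%:Z * (k%:Z - 1) * (k%:Z - 2).
Proof.
rewrite derivnXn hornerMn hornerXn expr1n natz.
by case: k => [|[|[|k]]] //=; rewrite !ffactnS ffactn0 /= muln1 !PoszM !intS; ring.
Qed.

Lemma horner_map_deriv (P : {poly {poly int}}) : (map_poly deriv P).[1] = (P.[1])^`().
Proof.
rewrite (@horner_coef_wide _ (size P)); last first.
  by rewrite map_polyE (leq_trans (size_Poly _)) // size_map.
rewrite (@horner_coef_wide _ (size P) P) // raddf_sum /=; apply: eq_bigr => i _.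
by rewrite coef_map_id0 ?deriv0 // expr1n !mulr1.
Qed.

Section GeneratingPolynomials.
Variable n : nat.

Lemma genpoly_deriv_at1 w : (genpoly w n)^`().[1] = \sum_(g : Dyck n) (occ w (dword g))%:Z.
Proof. by rewrite /genpoly raddf_sum horner_sum; apply: eq_bigr => g _; exact: deriv_exp_at1. Qed.

Lemma Vcoef_deriv3_at1 : (Vcoef n)^`(3).[1] = \sum_(g : Dyck n)
  (occ w_du (dword g))%:Z * ((occ w_du (dword g))%:Z - 1) * ((occ w_du (dword g))%:Z - 2).
Proof.
by rewrite /Vcoef /genpoly raddf_sum horner_sum; apply: eq_bigr => g _; exact: deriv3_exp_at1.
Qed.

Lemma Fcoef_dq_at1 : ((Fcoef n).[1])^`().[1] = \sum_(g : Dyck n) (occ w_duu (dword g))%:Z.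
Proof.
rewrite /Fcoef horner_sum raddf_sum horner_sum; apply: eq_bigr => g _.
by rewrite hornerM hornerXn expr1n mul1r hornerC deriv_exp_at1.
Qed.

Lemma Fcoef_dydq_at1 : (((Fcoef n)^`()).[1])^`().[1] =
  \sum_(g : Dyck n) (occ w_du (dword g))%:Z * (occ w_duu (dword g))%:Z.
Proof.
have -> : ((Fcoef n)^`()).[1] = \sum_(g : Dyck n) 'X^(occ w_duu (dword g)) *+ occ w_du (dword g).
  rewrite /Fcoef raddf_sum horner_sum; apply: eq_bigr => g _.
  rewrite /= derivM derivC mulr0 addr0 derivXn hornerM hornerMn hornerXn expr1n hornerC.
  by rewrite mulrnAl mul1r.
rewrite raddf_sum horner_sum; apply: eq_bigr => g _.
by rewrite /= derivMn hornerMn deriv_exp_at1 -mulr_natl natz mulrC.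
Qed.
End GeneratingPolynomials.

Section SaturatedChains.
Variable n : nat.
Local Notation N := n.*2.
Local Notation occD w g := (countz (occurs_at w (nth false (dword g))) N).
Local Notation V g := (occD w_du g).

Lemma sc3E : (sc3 n)%:Z = \sum_(g : Dyck n) (V g * (V g - 1) * (V g - 2)
  + 6 * ((V g - 1) * occD w_duu g) + 2 * occD w_dduu g + 2 * occD w_dudu g + 2 * occD w_duuu g).
Proof.
have mirror_ddu : \sum_(g : Dyck n) (V g - 1) * occD w_ddu g
    = \sum_(g : Dyck n) (V g - 1) * occD w_duu g.
  by rewrite -sum_dyck_mirror; apply: eq_bigr => g _; rewrite !countz_dyck_mirror.
have mirror_dddu : \sum_(g : Dyck n) occD w_dddu g = \sum_(g : Dyck n) occD w_duuu g.
  by rewrite -sum_dyck_mirror; apply: eq_bigr => g _; rewrite countz_dyck_mirror.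
rewrite sc3_sum_covers.
under eq_bigr => g _ do rewrite up_chains_dyck (up_chains3E (dword_vanishing g)).
transitivity (\sum_(g : Dyck n) (V g * (V g - 1) * (V g - 2) + 3 * ((V g - 1) * occD w_duu g)
  + 2 * occD w_dduu g + 2 * occD w_dudu g + occD w_duuu g)
  + 3 * \sum_(g : Dyck n) (V g - 1) * occD w_ddu g + \sum_(g : Dyck n) occD w_dddu g).
  by rewrite big_distrr -!big_split; apply: eq_bigr => g _ /=; rewrite /valley; ring.
by rewrite mirror_ddu mirror_dddu big_distrr -!big_split; apply: eq_bigr => g _ /=; ring.
Qed.
End SaturatedChains.

Theorem mainTheorem7 (n : nat) :
  (sc3 n)%:Z =
    2 * (Acoef n)^`().[1] + 2 * (Bcoef n)^`().[1] + 2 * (Ccoef n)^`().[1]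
    + (Vcoef n)^`(3).[1]
    + 6 * ((map_poly deriv ((Fcoef n)^`())).[1].[1]
           - (map_poly deriv (Fcoef n)).[1].[1]).
Proof.
rewrite !horner_map_deriv Fcoef_dydq_at1 Fcoef_dq_at1 Vcoef_deriv3_at1 !genpoly_deriv_at1.
rewrite sc3E -sumrB !big_distrr -!big_split; apply: eq_bigr => g _ /=.
rewrite !occ_countz ?size_dword //.
set du := countz (occurs_at w_du _) _; set duu := countz (occurs_at w_duu _) _.
set dduu := countz (occurs_at w_dduu _) _; set dudu := countz (occurs_at w_dudu _) _.
set duuu := countz (occurs_at w_duuu _) _.
ring.
Qed.
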